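(* Let $\mathcal{G}=(V,\mathcal{E})$ be a strongly connected digraph with $n\ge3$ nodes, $P$ an irreducible Markov chain transition matrix conforming to $\mathcal{G}$, and $\tau\in\mathbb{Z}_{>0}$. Let $i\in V$ be a leaf node with unique neighbor $j\ne i$. Then for every $k\in V\setminus\{i,j\}$, $\mathbb{P}(T_{ki}\le\tau)\le\mathbb{P}(T_{ii}\le\tau)$; that is, attacking node $i$ just as the surveillance agent leaves node $i$ is not better for the intruder than attacking node $i$ while the agent is at $k$.
   Context: $P=(p_{ij})$ conforms to $\mathcal{G}$ if it is row-stochastic, nonnegative, and $p_{ij}=0$ whenever $(i,j)\notin\mathcal{E}$. A leaf node $i$ with neighbor $j$ is a node such that the only edges between $i$ and other nodes are $(i,j)$ and $(j,i)$ (a self-loop at $i$ may be present). For the Markov chain $(X_k)$ with transition matrix $P$, $T_{ij}=\min\{k\ge1:X_k=j\}$ given $X_0=i$; in particular $T_{ii}$ is the first return time to $i$. *)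

From HB Require Import structures.
From mathcomp Require Import all_boot all_order all_algebra.
Set Implicit Arguments. Unset Strict Implicit. Unset Printing Implicit Defensive.
Import Order.TTheory GRing.Theory Num.Theory.
Local Open Scope ring_scope.

Section Defs.
Variables (R : realFieldType) (n : nat).

Definition strongly_connected (E : rel 'I_n) : Prop :=
  forall x y : 'I_n, connect E x y.

Definition conforms (E : rel 'I_n) (P : 'M[R]_n) : Prop :=
  [/\ forall x y, 0 <= P x y,
      forall x, \sum_(y < n) P x y = 1
    & forall x y, ~~ E x y -> P x y = 0].

Definition irreducible (P : 'M[R]_n) : Prop :=
  forall x y : 'I_n, exists m : nat, 0 < (P ^+ m) x y.

(* i is a leaf node with neighbor j: the only edges between i and other nodes
   are (i,j) and (j,i) (both present); a self-loop at i is allowed. *)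
Definition leaf (E : rel 'I_n) (i j : 'I_n) : Prop :=
  [/\ j != i, E i j, E j i &
      forall x, x != i -> (E i x = (x == j)) /\ (E x i = (x == j))].

(* first_hit P i m k = P(T_{ki} = m) for the chain started at X_0 = k,
   where T_{ki} = min{m >= 1 : X_m = i}:
     P(T = 1) = P k i,
     P(T = m+2) = sum_{h <> i} P k h * P(T_{hi} = m+1). *)
Fixpoint first_hit (P : 'M[R]_n) (i : 'I_n) (m : nat) (k : 'I_n) : R :=
  match m with
  | 0 => 0
  | 1 => P k i
  | m'.+1 => \sum_(h < n | h != i) P k h * first_hit P i m' h
  end.

Definition hit_le (P : 'M[R]_n) (k i : 'I_n) (tau : nat) : R :=
  \sum_(1 <= m < tau.+1) first_hit P i m k.

End Defs.

(* Node i can only be entered from j, so a walk from k <> i, j must visit j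
   before hitting i: P(T_ki <= t+1) <= P(T_ji <= t).  Node i can only be left
   towards j, so P(T_ii <= t+1) = P_ii + P_ij P(T_ji <= t) >= P(T_ji <= t),
   because P_ii + P_ij = 1 and P(T_ji <= t) <= 1. *)
From mathcomp Require Import all_boot all_order all_algebra.
Import Order.TTheory GRing.Theory Num.Theory.
Set Implicit Arguments. Unset Strict Implicit. Unset Printing Implicit Defensive.
Local Open Scope ring_scope.

Section HittingTimes.
Variables (R : realFieldType) (n : nat) (P : 'M[R]_n) (i : 'I_n).
Hypothesis P_ge0 : forall x y, 0 <= P x y.
Hypothesis P_row1 : forall x, \sum_(y < n) P x y = 1.

Lemma first_hit_ge0 m x : 0 <= first_hit P i m x.
Proof.
elim: m x => [|[|m] IH] x //=.
by apply: sumr_ge0 => h _; rewrite mulr_ge0 ?IH.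
Qed.

Lemma hit_le0 x : hit_le P x i 0 = 0.
Proof. by rewrite /hit_le big_geq. Qed.

Lemma hit_leSr m x :
  hit_le P x i m.+1 = hit_le P x i m + first_hit P i m.+1 x.
Proof. by rewrite /hit_le big_nat_recr. Qed.

Lemma hit_leS m x :
  hit_le P x i m.+1 = P x i + \sum_(h < n | h != i) P x h * hit_le P h i m.
Proof.
elim: m x => [|m IH] x.
  by rewrite hit_leSr hit_le0 add0r big1 ?addr0 // => h _; rewrite hit_le0 mulr0.
rewrite hit_leSr IH -addrA -big_split /=; congr (_ + _).
by apply: eq_bigr => h _; rewrite hit_leSr mulrDr.
Qed.

Lemma hit_le_leS m x : hit_le P x i m <= hit_le P x i m.+1.
Proof. by rewrite hit_leSr lerDl first_hit_ge0. Qed.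

Lemma row_split x : P x i + \sum_(h < n | h != i) P x h = 1.
Proof. by rewrite -(P_row1 x) [RHS](bigD1 i). Qed.

Lemma hit_le_le1 m x : hit_le P x i m <= 1.
Proof.
elim: m x => [|m IH] x; first by rewrite hit_le0.
rewrite hit_leS -(row_split x) lerD2l; apply: ler_sum => h _.
by rewrite -[leRHS]mulr1 ler_wpM2l.
Qed.

Lemma hit_leS_le_bound m x c : P x i = 0 ->
  (forall h, h != i -> hit_le P h i m <= c) -> hit_le P x i m.+1 <= c.
Proof.
move=> Pxi0 le_c; rewrite hit_leS Pxi0 add0r.
apply: (@le_trans _ _ (\sum_(h < n | h != i) P x h * c)).
  by apply: ler_sum => h hi; rewrite ler_wpM2l ?le_c.
by rewrite -mulr_suml; move: (row_split x); rewrite Pxi0 add0r => ->; rewrite mul1r.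
Qed.

Section Entrance.
Variable j : 'I_n.
Hypothesis P_in : forall x, x != i -> x != j -> P x i = 0.

Lemma hit_le_le_entrance m x : x != i -> hit_le P x i m <= hit_le P j i m.
Proof.
elim: m x => [|m IH] x xi; first by rewrite !hit_le0.
have [-> // | xj] := eqVneq x j.
by apply: le_trans (hit_le_leS _ _); apply: hit_leS_le_bound; rewrite ?P_in.
Qed.

Lemma hit_leS_le_entrance m x : x != i -> x != j ->
  hit_le P x i m.+1 <= hit_le P j i m.
Proof.
move=> xi xj; apply: hit_leS_le_bound => [|h]; first exact: P_in.
exact: hit_le_le_entrance.
Qed.

End Entrance.

Section Exit.
Variable j : 'I_n.
Hypothesis ji : j != i.
Hypothesis P_out : forall x, x != i -> x != j -> P i x = 0.

Lemma Pii_add_Pij : P i i + P i j = 1.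
Proof.
rewrite -(row_split i) (bigD1 j) //= big1 ?addr0 // => h /andP[hi hj].
exact: P_out.
Qed.

Lemma hit_leS_return m : hit_le P i i m.+1 = P i i + P i j * hit_le P j i m.
Proof.
rewrite hit_leS (bigD1 j) //= big1 ?addr0 // => h /andP[hi hj].
by rewrite P_out ?mul0r.
Qed.

Lemma hit_le_exit_le_return m : hit_le P j i m <= hit_le P i i m.+1.
Proof.
rewrite hit_leS_return -{1}(mul1r (hit_le P j i m)) -Pii_add_Pij mulrDl lerD2r.
by rewrite -[leRHS]mulr1 ler_wpM2l ?hit_le_le1.
Qed.

End Exit.

End HittingTimes.

Section Leaf.
Variables (R : realFieldType) (n : nat) (E : rel 'I_n) (P : 'M[R]_n) (i j : 'I_n).
Hypothesis P_conforms : conforms E P.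
Hypothesis i_leaf : leaf E i j.

Lemma leaf_in0 x : x != i -> x != j -> P x i = 0.
Proof.
move=> xi xj; case: P_conforms i_leaf => _ _ PE [_ _ _ nbr].
by apply: PE; have [_ ->] := nbr x xi.
Qed.

Lemma leaf_out0 x : x != i -> x != j -> P i x = 0.
Proof.
move=> xi xj; case: P_conforms i_leaf => _ _ PE [_ _ _ nbr].
by apply: PE; have [-> _] := nbr x xi.
Qed.

End Leaf.

Theorem lemma4 (R : realFieldType) (n : nat) (E : rel 'I_n) (P : 'M[R]_n)
  (tau : nat) (i j : 'I_n) :
  (3 <= n)%N ->
  strongly_connected E ->
  conforms E P ->
  irreducible P ->
  (0 < tau)%N ->
  leaf E i j ->
  forall k : 'I_n, k != i -> k != j ->
    hit_le P k i tau <= hit_le P i i tau.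
Proof.
move=> _ _ P_conforms _ tau_gt0 i_leaf k ki kj.
have [P_ge0 P_row1 _] := P_conforms.
have [ji _ _ _] := i_leaf.
case: tau tau_gt0 => [|t] // _.
apply: le_trans (hit_leS_le_entrance P_ge0 P_row1 (leaf_in0 P_conforms i_leaf) t ki kj) _.
exact: (hit_le_exit_le_return P_ge0 P_row1 ji (leaf_out0 P_conforms i_leaf) t).
Qed.
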